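(* The nilpotent Lie algebra $\mathfrak{h}_5\oplus\mathbb{R}^3$ admits weak HKT structures and does not admit any SKT structure. The Lie algebras $\mathfrak{h}_3^{\mathbb{C}}\oplus\mathbb{R}^2$ and $\mathfrak{h}_7^Q\oplus\mathbb{R}$ admit SKT structures and weak HKT structures.
   Context: $\mathfrak{h}_5$ is the $5$-dimensional Heisenberg Lie algebra (basis $e_1,\dots,e_5$ with dual basis satisfying $de^i=0$ for $i\le4$, $de^5=e^{12}+e^{34}$); $\mathfrak{h}_3^{\mathbb{C}}$ is the complex $3$-dimensional Heisenberg Lie algebra regarded as a real $6$-dimensional Lie algebra; $\mathfrak{h}_7^Q$ is the $7$-dimensional quaternionic Heisenberg Lie algebra (with $3$-dimensional center), given by $de^i=0$ for $i\le4$, $de^5=e^{12}+e^{34}$, $de^6=e^{13}-e^{24}$, $de^7=e^{14}+e^{23}$. An SKT structure on a Lie algebra is a complex structure $J$ together with a $J$-compatible inner product $g$ whose fundamental form $\omega=g(J\cdot,\cdot)$ satisfies $\partial\bar\partial\omega=0$. An HKT structure is a hypercomplex structure $(J_1,J_2,J_3)$ (complex structures with $J_1J_2=-J_2J_1=J_3$) with an inner product $g$ compatible with each $J_l$ such that $J_1d\omega_1=J_2d\omega_2=J_3d\omega_3$, where $\omega_l=g(J_l\cdot,\cdot)$; it is weak if the torsion $3$-form of the common Bismut connection is not closed. *)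

(* Real Lie algebras of dimension n are modelled on the column
   vectors 'cV[R]_n over a realType R (the real numbers), with the bracket
   determined by the differentials of the dual basis. *)
From HB Require Import structures.
From mathcomp Require Import all_boot all_order all_algebra.
From mathcomp Require Import reals.
Set Implicit Arguments. Unset Strict Implicit. Unset Printing Implicit Defensive.
Import Order.TTheory GRing.Theory Num.Theory.
Local Open Scope ring_scope.

Section LieForms.
Variable R : realType.
Variable n : nat.
Local Notation V := 'cV[R]_n.

Definition act (J : 'M[R]_n) (x : V) : V := J *m x.

(* Bracket from the structure equations: de^k(x,y) = - e^k([x,y]),
   i.e. the Chevalley--Eilenberg convention d a (x,y) = - a([x,y]). *)
Definition bracket_of (D : 'I_n -> V -> V -> R) (x y : V) : V :=
  \col_k (- D k x y).

Section WithBracket.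
Variable br : V -> V -> V.

Definition d2 (a : V -> V -> R) : V -> V -> V -> R :=
  fun x0 x1 x2 => - a (br x0 x1) x2 + a (br x0 x2) x1 - a (br x1 x2) x0.

Definition d3 (a : V -> V -> V -> R) : V -> V -> V -> V -> R :=
  fun x0 x1 x2 x3 =>
      - a (br x0 x1) x2 x3 + a (br x0 x2) x1 x3 - a (br x0 x3) x1 x2
      - a (br x1 x2) x0 x3 + a (br x1 x3) x0 x2 - a (br x2 x3) x0 x1.

Definition Jform3 (J : 'M[R]_n) (a : V -> V -> V -> R) : V -> V -> V -> R :=
  fun x y z => a (act J x) (act J y) (act J z).

Definition complex_structure (J : 'M[R]_n) : Prop :=
  (forall x, act J (act J x) = - x) /\
  (forall x y, br (act J x) (act J y) - act J (br (act J x) y)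
               - act J (br x (act J y)) - br x y = 0).

Definition ip (G : 'M[R]_n) (x y : V) : R := (x^T *m G *m y) ord0 ord0.

Definition inner_product (G : 'M[R]_n) : Prop :=
  G^T = G /\ (forall x : V, x != 0 -> 0 < ip G x x).

Definition compatible (J G : 'M[R]_n) : Prop :=
  forall x y, ip G (act J x) (act J y) = ip G x y.

Definition fundamental_form (J G : 'M[R]_n) : V -> V -> R :=
  fun x y => ip G (act J x) y.

(* torsion 3-form of the Bismut connection, H = J d omega (up to a global
   sign convention, irrelevant for closedness). *)
Definition bismut_torsion (J G : 'M[R]_n) : V -> V -> V -> R :=
  Jform3 J (d2 (fundamental_form J G)).

(* SKT: d d^c omega = 0, i.e. 2i ∂∂bar omega = d(J d omega) = 0 *)
Definition SKT_structure (J G : 'M[R]_n) : Prop :=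
  [/\ complex_structure J, inner_product G, compatible J G &
      forall x0 x1 x2 x3,
        d3 (Jform3 J (d2 (fundamental_form J G))) x0 x1 x2 x3 = 0].

Definition has_SKT : Prop := exists J G, SKT_structure J G.

Definition hypercomplex (J1 J2 J3 : 'M[R]_n) : Prop :=
  [/\ complex_structure J1, complex_structure J2, complex_structure J3 &
      forall x, act J1 (act J2 x) = act J3 x /\ act J2 (act J1 x) = - act J3 x].

Definition HKT_structure (J1 J2 J3 G : 'M[R]_n) : Prop :=
  [/\ hypercomplex J1 J2 J3, inner_product G,
      compatible J1 G /\ compatible J2 G /\ compatible J3 G &
      forall x y z,
        Jform3 J1 (d2 (fundamental_form J1 G)) x y z
          = Jform3 J2 (d2 (fundamental_form J2 G)) x y z /\
        Jform3 J2 (d2 (fundamental_form J2 G)) x y z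
          = Jform3 J3 (d2 (fundamental_form J3 G)) x y z].

Definition weak_HKT_structure (J1 J2 J3 G : 'M[R]_n) : Prop :=
  HKT_structure J1 J2 J3 G /\
  exists x0 x1 x2 x3, d3 (bismut_torsion J1 G) x0 x1 x2 x3 != 0.

Definition has_weak_HKT : Prop :=
  exists J1 J2 J3 G, weak_HKT_structure J1 J2 J3 G.

End WithBracket.
End LieForms.

Section Examples.
Variable R : realType.
Local Notation V := 'cV[R]_8.

(* e^{ij}(x,y) = x_i y_j - x_j y_i, with 0-based i j *)
Definition e2 (i j : nat) (x y : V) : R :=
  x (inord i) ord0 * y (inord j) ord0 - x (inord j) ord0 * y (inord i) ord0.

(* h_5 + R^3 : de^5 = e^12 + e^34 *)
Definition D_h5R3 (k : 'I_8) (x y : V) : R :=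
  if val k == 4%N then e2 0 1 x y + e2 2 3 x y else 0.

(* h_3^C + R^2 : de^5 = e^13 - e^24, de^6 = e^14 + e^23 *)
Definition D_h3CR2 (k : 'I_8) (x y : V) : R :=
  if val k == 4%N then e2 0 2 x y - e2 1 3 x y
  else if val k == 5%N then e2 0 3 x y + e2 1 2 x y
  else 0.

(* h_7^Q + R : de^5 = e^12+e^34, de^6 = e^13-e^24, de^7 = e^14+e^23 *)
Definition D_h7QR1 (k : 'I_8) (x y : V) : R :=
  if val k == 4%N then e2 0 1 x y + e2 2 3 x y
  else if val k == 5%N then e2 0 2 x y - e2 1 3 x y
  else if val k == 6%N then e2 0 3 x y + e2 1 2 x y
  else 0.

Definition h5R3 : V -> V -> V := bracket_of D_h5R3.
Definition h3CR2 : V -> V -> V := bracket_of D_h3CR2.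
Definition h7QR1 : V -> V -> V := bracket_of D_h7QR1.
End Examples.

From HB Require Import structures.
From mathcomp Require Import all_boot all_order all_algebra.
From mathcomp Require Import reals ring lra.
Set Implicit Arguments. Unset Strict Implicit. Unset Printing Implicit Defensive.
Import Order.TTheory GRing.Theory Num.Theory.
Local Open Scope ring_scope.

(* All three algebras are 2-step nilpotent, with brackets built from the
   2-forms e^12 + e^34, e^13 - e^24, e^14 + e^23, which are invariant under the
   flat quaternionic triple (Ji, Jj, Jk).  For a compatible complex structure J
   that is abelian ([Jx, Jy] = [x, y]) the Bismut torsion J d omega equals
   - g([x,y],z) + g([x,z],y) - g([y,z],x), which does not depend on J: hence the
   flat quaternionic structure is HKT, and evaluating the differential of its
   torsion on e1, e2, e3, e4 shows that it is weak.  On h5 + R^3 the derived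
   algebra is a line, which forces every complex structure to be abelian; then
   d(J d omega)(e1, e2, e3, e4) = 2 g(z, z) > 0 for the central vector z, so no
   metric is SKT.  The other two algebras carry explicit non-abelian SKT
   structures (J3C, g3C) and (J7Q, g7Q). *)

Section HermitianLieAlgebra.
Variables (R : realType) (n : nat) (br : 'cV[R]_n -> 'cV[R]_n -> 'cV[R]_n).
Local Notation V := 'cV[R]_n.

Lemma actN (J : 'M[R]_n) (x : V) : act J (- x) = - act J x.
Proof. exact: mulmxN. Qed.

Lemma actD (J : 'M[R]_n) (x y : V) : act J (x + y) = act J x + act J y.
Proof. exact: mulmxDr. Qed.

Lemma actZ (J : 'M[R]_n) c (x : V) : act J (c *: x) = c *: act J x.
Proof. by rewrite /act scalemxAr. Qed.

Lemma ipZl (G : 'M[R]_n) c (x y : V) : ip G (c *: x) y = c * ip G x y.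
Proof. by rewrite /ip linearZ /= -!scalemxAl mxE. Qed.

Lemma ipZr (G : 'M[R]_n) c (x y : V) : ip G x (c *: y) = c * ip G x y.
Proof. by rewrite /ip -scalemxAr mxE. Qed.

Lemma ip0l (G : 'M[R]_n) (y : V) : ip G 0 y = 0.
Proof. by rewrite /ip trmx0 !mul0mx mxE. Qed.

Lemma inner_product1 : inner_product (1%:M : 'M[R]_n).
Proof.
split=> [|x x0]; first exact: trmx1.
have sq_ge0 i : 0 <= x^T ord0 i * x i ord0 by rewrite mxE -expr2 sqr_ge0.
rewrite /ip mulmx1 mxE lt_def sumr_ge0 // andbT.
apply: contra x0 => /eqP sum0; apply/eqP/matrixP => i j.
have := psumr_eq0P (fun i _ => sq_ge0 i) sum0 (i := i) isT.
by rewrite (ord1 j) !mxE => /eqP; rewrite mulf_eq0 orbb => /eqP.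
Qed.

Definition abelian (J : 'M[R]_n) : Prop :=
  forall x y, br (act J x) (act J y) = br x y.

Lemma abelian_complex_structure (J : 'M[R]_n) :
  (forall x, act J (act J x) = - x) -> (forall x y, br x (- y) = - br x y) ->
  abelian J -> complex_structure br J.
Proof.
move=> JJ brN abJ; split=> // x y.
have -> : br x (act J y) = - br (act J x) y by rewrite -abJ JJ brN.
by rewrite abJ actN opprK subrK subrr.
Qed.

(* Compatibility turns omega(u, J z) = g(J u, J z) into g(u, z). *)
Lemma torsion_compatibleE (J G : 'M[R]_n) x y z : compatible J G ->
  Jform3 J (d2 br (fundamental_form J G)) x y z =
  - ip G (br (act J x) (act J y)) z + ip G (br (act J x) (act J z)) y
  - ip G (br (act J y) (act J z)) x.
Proof. by move=> compJ; rewrite /Jform3 /d2 /fundamental_form !compJ. Qed.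

Lemma torsion_abelianE (J G : 'M[R]_n) x y z : compatible J G -> abelian J ->
  Jform3 J (d2 br (fundamental_form J G)) x y z =
  - ip G (br x y) z + ip G (br x z) y - ip G (br y z) x.
Proof. by move=> compJ abJ; rewrite torsion_compatibleE // !abJ. Qed.

Lemma HKT_structure_abelian (J1 J2 J3 G : 'M[R]_n) :
  hypercomplex br J1 J2 J3 -> inner_product G ->
  compatible J1 G -> compatible J2 G -> compatible J3 G ->
  abelian J1 -> abelian J2 -> abelian J3 -> HKT_structure br J1 J2 J3 G.
Proof.
move=> hJ posG c1 c2 c3 a1 a2 a3; split=> // x y z.
by rewrite !torsion_abelianE.
Qed.

Lemma d3_torsionE (J G : 'M[R]_n) x0 x1 x2 x3 : compatible J G ->
  (forall x y w, br (act J (br x y)) w = 0) ->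
  d3 br (Jform3 J (d2 br (fundamental_form J G))) x0 x1 x2 x3 =
    ip G (br (act J x2) (act J x3)) (br x0 x1)
  - ip G (br (act J x1) (act J x3)) (br x0 x2)
  + ip G (br (act J x1) (act J x2)) (br x0 x3)
  + ip G (br (act J x0) (act J x3)) (br x1 x2)
  - ip G (br (act J x0) (act J x2)) (br x1 x3)
  + ip G (br (act J x0) (act J x1)) (br x2 x3).
Proof.
move=> compJ JbrC; rewrite /d3 !torsion_compatibleE // !JbrC !ip0l; ring.
Qed.

Lemma d3_torsion_abelianE (J G : 'M[R]_n) x0 x1 x2 x3 :
  (forall x y w, br (br x y) w = 0) ->
  (forall x, act J (act J x) = - x) -> compatible J G -> abelian J ->
  d3 br (Jform3 J (d2 br (fundamental_form J G))) x0 x1 x2 x3 =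
    ip G (br x2 x3) (br x0 x1) - ip G (br x1 x3) (br x0 x2)
  + ip G (br x1 x2) (br x0 x3) + ip G (br x0 x3) (br x1 x2)
  - ip G (br x0 x2) (br x1 x3) + ip G (br x0 x1) (br x2 x3).
Proof.
move=> br_derived_central JJ compJ abJ; rewrite d3_torsionE // ?abJ // => x y w.
have -> : w = act J (act J (- w)) by rewrite JJ opprK.
by rewrite abJ br_derived_central.
Qed.

Lemma act_independent (J : 'M[R]_n) (z : V) a b :
  (forall x, act J (act J x) = - x) -> z != 0 ->
  a *: z + b *: act J z = 0 -> a = 0 /\ b = 0.
Proof.
move=> JJ z0 eq0.
have eqJ : a *: act J z - b *: z = 0.
  by move: (congr1 (act J) eq0); rewrite actD !actZ JJ scalerN => ->; exact: mulmx0.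
have : (a ^+ 2 + b ^+ 2) *: z = 0.
  have -> : (a ^+ 2 + b ^+ 2) *: z =
      a *: (a *: z + b *: act J z) - b *: (a *: act J z - b *: z).
    by apply/matrixP => i j; rewrite !mxE; ring.
  by rewrite eq0 eqJ !scaler0 subr0.
move/eqP; rewrite scaler_eq0 (negPf z0) orbF => /eqP ab0.
by split; nra.
Qed.

(* A complex structure maps the line spanned by [z] off itself, so the
   Nijenhuis condition splits into two scalar equations. *)
Lemma abelian_rank_one (z : V) (beta : V -> V -> R) (J : 'M[R]_n) :
  (forall x y, br x y = beta x y *: z) -> z != 0 ->
  complex_structure br J -> abelian J.
Proof.
move=> brE z0 [JJ NJ] x y.
have [ab0 _] : beta (act J x) (act J y) - beta x y = 0 /\
               - (beta (act J x) y + beta x (act J y)) = 0.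
  apply: act_independent JJ z0 _; rewrite -(NJ x y) !brE !actZ.
  by apply/matrixP => i j; rewrite !mxE; ring.
by rewrite !brE; move/eqP: ab0; rewrite subr_eq0 => /eqP ->.
Qed.

End HermitianLieAlgebra.

Section Coordinates.
Variable R : realType.
Local Notation V := 'cV[R]_8.

Definition vec8 (a0 a1 a2 a3 a4 a5 a6 a7 : R) : V :=
  \col_(k < 8) nth 0 [:: a0; a1; a2; a3; a4; a5; a6; a7] k.

Lemma vec8E a0 a1 a2 a3 a4 a5 a6 a7 (i : nat) : (i < 8)%N ->
  vec8 a0 a1 a2 a3 a4 a5 a6 a7 (inord i) ord0 =
  nth 0 [:: a0; a1; a2; a3; a4; a5; a6; a7] i.
Proof. by move=> lti; rewrite mxE inordK. Qed.

Lemma vec8_surj (x : V) : exists a0 a1 a2 a3 a4 a5 a6 a7,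
  x = vec8 a0 a1 a2 a3 a4 a5 a6 a7.
Proof.
exists (x (inord 0) ord0), (x (inord 1) ord0), (x (inord 2) ord0),
  (x (inord 3) ord0), (x (inord 4) ord0), (x (inord 5) ord0),
  (x (inord 6) ord0), (x (inord 7) ord0).
apply/matrixP => i j; rewrite (ord1 j) mxE.
by case: i => [[|[|[|[|[|[|[|[|//]]]]]]]] lti]; congr (x _ _); apply/val_inj; rewrite /= inordK.
Qed.

Lemma vec8_eq0 a0 a1 a2 a3 a4 a5 a6 a7 :
  vec8 a0 a1 a2 a3 a4 a5 a6 a7 = 0 ->
  a0 = 0 /\ a1 = 0 /\ a2 = 0 /\ a3 = 0 /\ a4 = 0 /\ a5 = 0 /\ a6 = 0 /\ a7 = 0.
Proof.
move/matrixP=> x0.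
have := x0 (inord 0) ord0; have := x0 (inord 1) ord0; have := x0 (inord 2) ord0;
have := x0 (inord 3) ord0; have := x0 (inord 4) ord0; have := x0 (inord 5) ord0;
have := x0 (inord 6) ord0; have := x0 (inord 7) ord0.
by rewrite !vec8E // !mxE.
Qed.

Lemma sumsq8_gt0 a0 a1 a2 a3 a4 a5 a6 a7 : vec8 a0 a1 a2 a3 a4 a5 a6 a7 != 0 ->
  0 < a0 * a0 + a1 * a1 + a2 * a2 + a3 * a3 + a4 * a4 + a5 * a5 + a6 * a6 + a7 * a7.
Proof.
move=> x0; rewrite ltNge; apply: contra x0 => le0.
apply/eqP/matrixP => i j; rewrite !mxE.
by case: i => [[|[|[|[|[|[|[|[|//]]]]]]]] lti] /=; nra.
Qed.

Lemma vec8N a0 a1 a2 a3 a4 a5 a6 a7 :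
  - vec8 a0 a1 a2 a3 a4 a5 a6 a7 = vec8 (- a0) (- a1) (- a2) (- a3) (- a4) (- a5) (- a6) (- a7).
Proof. by apply/matrixP; case=> [[|[|[|[|[|[|[|[|//]]]]]]]] ?] ?; rewrite !mxE. Qed.

Definition mx8 (rows : seq (seq R)) : 'M[R]_8 :=
  \matrix_(i < 8, j < 8) nth 0 (nth [::] rows i) j.

Definition row_dot (r : seq R) a0 a1 a2 a3 a4 a5 a6 a7 :=
  nth 0 r 0 * a0 + nth 0 r 1 * a1 + nth 0 r 2 * a2 + nth 0 r 3 * a3 +
  nth 0 r 4 * a4 + nth 0 r 5 * a5 + nth 0 r 6 * a6 + nth 0 r 7 * a7.

Lemma mul_mx8 rows a0 a1 a2 a3 a4 a5 a6 a7 :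
  mx8 rows *m vec8 a0 a1 a2 a3 a4 a5 a6 a7 =
  vec8 (row_dot (nth [::] rows 0) a0 a1 a2 a3 a4 a5 a6 a7)
       (row_dot (nth [::] rows 1) a0 a1 a2 a3 a4 a5 a6 a7)
       (row_dot (nth [::] rows 2) a0 a1 a2 a3 a4 a5 a6 a7)
       (row_dot (nth [::] rows 3) a0 a1 a2 a3 a4 a5 a6 a7)
       (row_dot (nth [::] rows 4) a0 a1 a2 a3 a4 a5 a6 a7)
       (row_dot (nth [::] rows 5) a0 a1 a2 a3 a4 a5 a6 a7)
       (row_dot (nth [::] rows 6) a0 a1 a2 a3 a4 a5 a6 a7)
       (row_dot (nth [::] rows 7) a0 a1 a2 a3 a4 a5 a6 a7).
Proof.
apply/matrixP => i j; rewrite !mxE !big_ord_recr big_ord0 /= !mxE /= /row_dot add0r.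
by case: i => [[|[|[|[|[|[|[|[|//]]]]]]]] lti].
Qed.

Lemma dot8 a0 a1 a2 a3 a4 a5 a6 a7 b0 b1 b2 b3 b4 b5 b6 b7 :
  ((vec8 a0 a1 a2 a3 a4 a5 a6 a7)^T *m vec8 b0 b1 b2 b3 b4 b5 b6 b7) ord0 ord0 =
  a0 * b0 + a1 * b1 + a2 * b2 + a3 * b3 + a4 * b4 + a5 * b5 + a6 * b6 + a7 * b7.
Proof. by rewrite !mxE !big_ord_recr big_ord0 /= !mxE /= add0r. Qed.

Lemma ip1_vec8 a0 a1 a2 a3 a4 a5 a6 a7 b0 b1 b2 b3 b4 b5 b6 b7 :
  ip 1%:M (vec8 a0 a1 a2 a3 a4 a5 a6 a7) (vec8 b0 b1 b2 b3 b4 b5 b6 b7) =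
  a0 * b0 + a1 * b1 + a2 * b2 + a3 * b3 + a4 * b4 + a5 * b5 + a6 * b6 + a7 * b7.
Proof. by rewrite /ip mulmx1 dot8. Qed.

Lemma ip_mx8 rows a0 a1 a2 a3 a4 a5 a6 a7 b0 b1 b2 b3 b4 b5 b6 b7 :
  ip (mx8 rows) (vec8 a0 a1 a2 a3 a4 a5 a6 a7) (vec8 b0 b1 b2 b3 b4 b5 b6 b7) =
  a0 * row_dot (nth [::] rows 0) b0 b1 b2 b3 b4 b5 b6 b7 +
  a1 * row_dot (nth [::] rows 1) b0 b1 b2 b3 b4 b5 b6 b7 +
  a2 * row_dot (nth [::] rows 2) b0 b1 b2 b3 b4 b5 b6 b7 +
  a3 * row_dot (nth [::] rows 3) b0 b1 b2 b3 b4 b5 b6 b7 +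
  a4 * row_dot (nth [::] rows 4) b0 b1 b2 b3 b4 b5 b6 b7 +
  a5 * row_dot (nth [::] rows 5) b0 b1 b2 b3 b4 b5 b6 b7 +
  a6 * row_dot (nth [::] rows 6) b0 b1 b2 b3 b4 b5 b6 b7 +
  a7 * row_dot (nth [::] rows 7) b0 b1 b2 b3 b4 b5 b6 b7.
Proof. by rewrite /ip -mulmxA mul_mx8 dot8. Qed.

Lemma h5R3E a0 a1 a2 a3 a4 a5 a6 a7 b0 b1 b2 b3 b4 b5 b6 b7 :
  h5R3 (vec8 a0 a1 a2 a3 a4 a5 a6 a7) (vec8 b0 b1 b2 b3 b4 b5 b6 b7) =
  vec8 0 0 0 0 (- (a0 * b1 - a1 * b0 + (a2 * b3 - a3 * b2))) 0 0 0.
Proof.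
apply/matrixP => i j; rewrite !mxE /D_h5R3 /e2.
by case: i => [[|[|[|[|[|[|[|[|//]]]]]]]] lti] /=; rewrite ?oppr0 // !vec8E.
Qed.

Lemma h3CR2E a0 a1 a2 a3 a4 a5 a6 a7 b0 b1 b2 b3 b4 b5 b6 b7 :
  h3CR2 (vec8 a0 a1 a2 a3 a4 a5 a6 a7) (vec8 b0 b1 b2 b3 b4 b5 b6 b7) =
  vec8 0 0 0 0 (- (a0 * b2 - a2 * b0 - (a1 * b3 - a3 * b1)))
               (- (a0 * b3 - a3 * b0 + (a1 * b2 - a2 * b1))) 0 0.
Proof.
apply/matrixP => i j; rewrite !mxE /D_h3CR2 /e2.
by case: i => [[|[|[|[|[|[|[|[|//]]]]]]]] lti] /=; rewrite ?oppr0 // !vec8E.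
Qed.

Lemma h7QR1E a0 a1 a2 a3 a4 a5 a6 a7 b0 b1 b2 b3 b4 b5 b6 b7 :
  h7QR1 (vec8 a0 a1 a2 a3 a4 a5 a6 a7) (vec8 b0 b1 b2 b3 b4 b5 b6 b7) =
  vec8 0 0 0 0 (- (a0 * b1 - a1 * b0 + (a2 * b3 - a3 * b2)))
               (- (a0 * b2 - a2 * b0 - (a1 * b3 - a3 * b1)))
               (- (a0 * b3 - a3 * b0 + (a1 * b2 - a2 * b1))) 0.
Proof.
apply/matrixP => i j; rewrite !mxE /D_h7QR1 /e2.
by case: i => [[|[|[|[|[|[|[|[|//]]]]]]]] lti] /=; rewrite ?oppr0 // !vec8E.
Qed.

End Coordinates.

Ltac coords x := have [? [? [? [? [? [? [? [? ->]]]]]]]] := vec8_surj x.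

Ltac vec8_eq :=
  apply/matrixP; case=> [[|[|[|[|[|[|[|[|//]]]]]]]] ?] ?; rewrite !mxE /=.

Section Quaternionic.
Variable R : realType.
Local Notation V := 'cV[R]_8.

Definition Ji : 'M[R]_8 := mx8
  [:: [:: 0; -1; 0;  0;  0;  0;  0;  0];
      [:: 1;  0; 0;  0;  0;  0;  0;  0];
      [:: 0;  0; 0;  1;  0;  0;  0;  0];
      [:: 0;  0; -1; 0;  0;  0;  0;  0];
      [:: 0;  0; 0;  0;  0; -1;  0;  0];
      [:: 0;  0; 0;  0;  1;  0;  0;  0];
      [:: 0;  0; 0;  0;  0;  0;  0; -1];
      [:: 0;  0; 0;  0;  0;  0;  1;  0]].

Definition Jj : 'M[R]_8 := mx8
  [:: [:: 0; 0; -1;  0;  0;  0;  0;  0];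
      [:: 0; 0;  0; -1;  0;  0;  0;  0];
      [:: 1; 0;  0;  0;  0;  0;  0;  0];
      [:: 0; 1;  0;  0;  0;  0;  0;  0];
      [:: 0; 0;  0;  0;  0;  0; -1;  0];
      [:: 0; 0;  0;  0;  0;  0;  0;  1];
      [:: 0; 0;  0;  0;  1;  0;  0;  0];
      [:: 0; 0;  0;  0;  0; -1;  0;  0]].

Definition Jk : 'M[R]_8 := mx8
  [:: [::  0; 0;  0; 1;  0;  0;  0;  0];
      [::  0; 0; -1; 0;  0;  0;  0;  0];
      [::  0; 1;  0; 0;  0;  0;  0;  0];
      [:: -1; 0;  0; 0;  0;  0;  0;  0];
      [::  0; 0;  0; 0;  0;  0;  0; -1];
      [::  0; 0;  0; 0;  0;  0; -1;  0];
      [::  0; 0;  0; 0;  0;  1;  0;  0];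
      [::  0; 0;  0; 0;  1;  0;  0;  0]].

Lemma act_Ji a0 a1 a2 a3 a4 a5 a6 a7 : act Ji (vec8 a0 a1 a2 a3 a4 a5 a6 a7) =
  vec8 (- a1) a0 a3 (- a2) (- a5) a4 (- a7) a6.
Proof. by rewrite /act mul_mx8 /row_dot /=; congr vec8; ring. Qed.

Lemma act_Jj a0 a1 a2 a3 a4 a5 a6 a7 : act Jj (vec8 a0 a1 a2 a3 a4 a5 a6 a7) =
  vec8 (- a2) (- a3) a0 a1 (- a6) a7 a4 (- a5).
Proof. by rewrite /act mul_mx8 /row_dot /=; congr vec8; ring. Qed.

Lemma act_Jk a0 a1 a2 a3 a4 a5 a6 a7 : act Jk (vec8 a0 a1 a2 a3 a4 a5 a6 a7) =
  vec8 a3 (- a2) a1 (- a0) (- a7) (- a6) a5 a4.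
Proof. by rewrite /act mul_mx8 /row_dot /=; congr vec8; ring. Qed.

Lemma quaternionic_relations (x : V) :
  [/\ act Ji (act Ji x) = - x, act Jj (act Jj x) = - x, act Jk (act Jk x) = - x,
      act Ji (act Jj x) = act Jk x & act Jj (act Ji x) = - act Jk x].
Proof.
by coords x; rewrite ?act_Ji ?act_Jj ?act_Jk ?act_Ji ?act_Jj !vec8N;
  split; congr vec8; ring.
Qed.

Lemma quaternionic_orthogonal :
  [/\ compatible Ji (1%:M : 'M[R]_8), compatible Jj (1%:M : 'M[R]_8)
    & compatible Jk (1%:M : 'M[R]_8)].
Proof.
by split=> x y; coords x; coords y;
  rewrite ?act_Ji ?act_Jj ?act_Jk !ip1_vec8; ring.
Qed.

Lemma quaternionic_HKT (br : V -> V -> V) :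
  (forall x y, br x (- y) = - br x y) ->
  abelian br Ji -> abelian br Jj -> abelian br Jk -> HKT_structure br Ji Jj Jk 1%:M.
Proof.
move=> brN abI abJ abK.
have [oI oJ oK] := quaternionic_orthogonal.
have rels := quaternionic_relations.
apply: HKT_structure_abelian => //; last exact: inner_product1.
split=> [|||x]; try apply: abelian_complex_structure => // x;
  by case: (rels x).
Qed.

End Quaternionic.

Arguments Ji {R}.
Arguments Jj {R}.
Arguments Jk {R}.

Section Examples.
Variable R : realType.
Local Notation V := 'cV[R]_8.
Local Notation u0 := (vec8 1 0 0 0 0 0 0 0 : V).
Local Notation u1 := (vec8 0 1 0 0 0 0 0 0 : V).
Local Notation u2 := (vec8 0 0 1 0 0 0 0 0 : V).
Local Notation u3 := (vec8 0 0 0 1 0 0 0 0 : V).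

Lemma h5R3_oppr (x y : V) : h5R3 x (- y) = - h5R3 x y.
Proof. by coords x; coords y; rewrite vec8N !h5R3E vec8N; congr vec8; ring. Qed.

Lemma h5R3_derived_central (x y w : V) : h5R3 (h5R3 x y) w = 0.
Proof. by coords x; coords y; coords w; rewrite !h5R3E; vec8_eq; ring. Qed.

Lemma h5R3_quaternionic_abelian :
  [/\ abelian (@h5R3 R) Ji, abelian (@h5R3 R) Jj & abelian (@h5R3 R) Jk].
Proof.
by split=> x y; coords x; coords y;
  rewrite ?act_Ji ?act_Jj ?act_Jk !h5R3E; congr vec8; ring.
Qed.

Lemma h5R3_has_weak_HKT : has_weak_HKT (@h5R3 R).
Proof.
have [abI abJ abK] := h5R3_quaternionic_abelian.
have [oI _ _] := quaternionic_orthogonal R.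
exists Ji, Jj, Jk, 1%:M; split; first exact: quaternionic_HKT h5R3_oppr abI abJ abK.
exists u0, u1, u2, u3.
rewrite /bismut_torsion d3_torsion_abelianE //; last 2 first.
- exact: h5R3_derived_central.
- by move=> x; case: (quaternionic_relations x).
rewrite !h5R3E !ip1_vec8; apply/eqP; lra.
Qed.

Lemma h5R3_rank_one (x y : V) :
  h5R3 x y = (- (e2 0 1 x y + e2 2 3 x y)) *: vec8 0 0 0 0 1 0 0 0.
Proof.
by coords x; coords y; rewrite h5R3E /e2 !vec8E //=; vec8_eq; ring.
Qed.

Lemma h5R3_no_SKT : ~ has_SKT (@h5R3 R).
Proof.
move=> [J [G [cJ posG compJ closed]]].
have z0 : vec8 0 0 0 0 1 0 0 0 != 0 :> V.
  by apply/eqP => /vec8_eq0 [_ [_ [_ [_ [/eqP]]]]]; rewrite oner_eq0.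
have abJ := abelian_rank_one h5R3_rank_one z0 cJ.
have := closed u0 u1 u2 u3.
rewrite d3_torsion_abelianE //; last 2 first.
- exact: h5R3_derived_central.
- exact: cJ.1.
rewrite !h5R3_rank_one !ipZl !ipZr /e2 !vec8E //=.
have := posG.2 _ z0; lra.
Qed.

Lemma h3CR2_oppr (x y : V) : h3CR2 x (- y) = - h3CR2 x y.
Proof. by coords x; coords y; rewrite vec8N !h3CR2E vec8N; congr vec8; ring. Qed.

Lemma h3CR2_derived_central (x y w : V) : h3CR2 (h3CR2 x y) w = 0.
Proof. by coords x; coords y; coords w; rewrite !h3CR2E; vec8_eq; ring. Qed.

Lemma h3CR2_quaternionic_abelian :
  [/\ abelian (@h3CR2 R) Ji, abelian (@h3CR2 R) Jj & abelian (@h3CR2 R) Jk].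
Proof.
by split=> x y; coords x; coords y;
  rewrite ?act_Ji ?act_Jj ?act_Jk !h3CR2E; congr vec8; ring.
Qed.

Lemma h3CR2_has_weak_HKT : has_weak_HKT (@h3CR2 R).
Proof.
have [abI abJ abK] := h3CR2_quaternionic_abelian.
have [oI _ _] := quaternionic_orthogonal R.
exists Ji, Jj, Jk, 1%:M; split; first exact: quaternionic_HKT h3CR2_oppr abI abJ abK.
exists u0, u1, u2, u3.
rewrite /bismut_torsion d3_torsion_abelianE //; last 2 first.
- exact: h3CR2_derived_central.
- by move=> x; case: (quaternionic_relations x).
rewrite !h3CR2E !ip1_vec8; apply/eqP; lra.
Qed.

Lemma h7QR1_oppr (x y : V) : h7QR1 x (- y) = - h7QR1 x y.
Proof. by coords x; coords y; rewrite vec8N !h7QR1E vec8N; congr vec8; ring. Qed.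

Lemma h7QR1_derived_central (x y w : V) : h7QR1 (h7QR1 x y) w = 0.
Proof. by coords x; coords y; coords w; rewrite !h7QR1E; vec8_eq; ring. Qed.

Lemma h7QR1_quaternionic_abelian :
  [/\ abelian (@h7QR1 R) Ji, abelian (@h7QR1 R) Jj & abelian (@h7QR1 R) Jk].
Proof.
by split=> x y; coords x; coords y;
  rewrite ?act_Ji ?act_Jj ?act_Jk !h7QR1E; congr vec8; ring.
Qed.

Lemma h7QR1_has_weak_HKT : has_weak_HKT (@h7QR1 R).
Proof.
have [abI abJ abK] := h7QR1_quaternionic_abelian.
have [oI _ _] := quaternionic_orthogonal R.
exists Ji, Jj, Jk, 1%:M; split; first exact: quaternionic_HKT h7QR1_oppr abI abJ abK.
exists u0, u1, u2, u3.
rewrite /bismut_torsion d3_torsion_abelianE //; last 2 first.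
- exact: h7QR1_derived_central.
- by move=> x; case: (quaternionic_relations x).
rewrite !h7QR1E !ip1_vec8; apply/eqP; lra.
Qed.

Definition J7Q : 'M[R]_8 := mx8
  [:: [:: 0; -1; 0;  0; 0;  0;  0;  0];
      [:: 1;  0; 0;  0; 0;  0;  0;  0];
      [:: 0;  0; 0; -1; 0;  0;  0;  0];
      [:: 0;  0; 1;  0; 0;  0;  0;  0];
      [:: 0;  0; 0;  0; 0;  0;  0; -1];
      [:: 0;  0; 0;  0; 0;  0; -1;  0];
      [:: 0;  0; 0;  0; 0;  1;  0;  0];
      [:: 0;  0; 0;  0; 1;  0;  0;  0]].

Definition g7Q : 'M[R]_8 := mx8
  [:: [:: 1; 0; 0; 0; 0; 0; 0; 0];
      [:: 0; 1; 0; 0; 0; 0; 0; 0];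
      [:: 0; 0; 1; 0; 0; 0; 0; 0];
      [:: 0; 0; 0; 1; 0; 0; 0; 0];
      [:: 0; 0; 0; 0; 2; 0; 0; 0];
      [:: 0; 0; 0; 0; 0; 1; 0; 0];
      [:: 0; 0; 0; 0; 0; 0; 1; 0];
      [:: 0; 0; 0; 0; 0; 0; 0; 2]].

Lemma act_J7Q a0 a1 a2 a3 a4 a5 a6 a7 : act J7Q (vec8 a0 a1 a2 a3 a4 a5 a6 a7) =
  vec8 (- a1) a0 (- a3) a2 (- a7) (- a6) a5 a4.
Proof. by rewrite /act mul_mx8 /row_dot /=; congr vec8; ring. Qed.

Lemma ip_g7Q a0 a1 a2 a3 a4 a5 a6 a7 b0 b1 b2 b3 b4 b5 b6 b7 :
  ip g7Q (vec8 a0 a1 a2 a3 a4 a5 a6 a7) (vec8 b0 b1 b2 b3 b4 b5 b6 b7) =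
  a0 * b0 + a1 * b1 + a2 * b2 + a3 * b3 + 2 * a4 * b4 + a5 * b5 + a6 * b6 + 2 * a7 * b7.
Proof. by rewrite ip_mx8 /row_dot /=; ring. Qed.

Lemma g7Q_inner_product : inner_product g7Q.
Proof.
split.
  by apply/matrixP; do 2 case=> [[|[|[|[|[|[|[|[|//]]]]]]]] ?]; rewrite !mxE.
move=> x; coords x => x0; rewrite ip_g7Q.
have := sumsq8_gt0 x0; nra.
Qed.

Lemma J7Q_g7Q_compatible : compatible J7Q g7Q.
Proof. by move=> x y; coords x; coords y; rewrite !act_J7Q !ip_g7Q; ring. Qed.

Lemma J7Q_complex_structure : complex_structure (@h7QR1 R) J7Q.
Proof.
split=> [x | x y]; first by coords x; rewrite !act_J7Q vec8N.
by coords x; coords y; rewrite !act_J7Q !h7QR1E !act_J7Q; vec8_eq; ring.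
Qed.

Lemma h7QR1_has_SKT : has_SKT (@h7QR1 R).
Proof.
exists J7Q, g7Q; split=> [||| x0 x1 x2 x3].
- exact: J7Q_complex_structure.
- exact: g7Q_inner_product.
- exact: J7Q_g7Q_compatible.
rewrite d3_torsionE; last 2 first.
- exact: J7Q_g7Q_compatible.
- by move=> x y w; coords x; coords y; coords w; rewrite !h7QR1E act_J7Q h7QR1E; vec8_eq; ring.
by coords x0; coords x1; coords x2; coords x3; rewrite !act_J7Q !h7QR1E !ip_g7Q; ring.
Qed.

Definition J3C : 'M[R]_8 := mx8
  [:: [::     0; -(7/4); 1/2; 2;   0;  0;  0;  0];
      [::     0; -(1/2);   1; 0;   0;  0;  0;  0];
      [::     0; -(5/4); 1/2; 0;   0;  0;  0;  0];
      [:: -(1/2); -(1/8); 3/4; 0;   0;  0;  0;  0];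
      [::     0;      0;   0; 0;   0; -2;  0;  0];
      [::     0;      0;   0; 0; 1/2;  0;  0;  0];
      [::     0;      0;   0; 0;   0;  0;  0; -1];
      [::     0;      0;   0; 0;   0;  0;  1;  0]].

Definition g3C : 'M[R]_8 := mx8
  [:: [::     1;  1/4; -(1/2);      0; 0;  0; 0; 0];
      [::   1/4;  9/4;     -1; -(5/2); 0;  0; 0; 0];
      [:: -(1/2);  -1;      1;      1; 0;  0; 0; 0];
      [::     0; -(5/2);    1;      4; 0;  0; 0; 0];
      [::     0;    0;      0;      0; 4;  0; 0; 0];
      [::     0;    0;      0;      0; 0; 16; 0; 0];
      [::     0;    0;      0;      0; 0;  0; 1; 0];
      [::     0;    0;      0;      0; 0;  0; 0; 1]].

Lemma act_J3C a0 a1 a2 a3 a4 a5 a6 a7 : act J3C (vec8 a0 a1 a2 a3 a4 a5 a6 a7) =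
  vec8 (- (7/4) * a1 + 1/2 * a2 + 2 * a3) (- (1/2) * a1 + a2)
       (- (5/4) * a1 + 1/2 * a2) (- (1/2) * a0 - 1/8 * a1 + 3/4 * a2)
       (- 2 * a5) (1/2 * a4) (- a7) a6.
Proof. by rewrite /act mul_mx8 /row_dot /=; congr vec8; field. Qed.

Lemma ip_g3C a0 a1 a2 a3 a4 a5 a6 a7 b0 b1 b2 b3 b4 b5 b6 b7 :
  ip g3C (vec8 a0 a1 a2 a3 a4 a5 a6 a7) (vec8 b0 b1 b2 b3 b4 b5 b6 b7) =
  a0 * (b0 + 1/4 * b1 - 1/2 * b2) + a1 * (1/4 * b0 + 9/4 * b1 - b2 - 5/2 * b3)
  + a2 * (- (1/2) * b0 - b1 + b2 + b3) + a3 * (- (5/2) * b1 + b2 + 4 * b3)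
  + 4 * a4 * b4 + 16 * a5 * b5 + a6 * b6 + a7 * b7.
Proof. by rewrite ip_mx8 /row_dot /=; field. Qed.

Lemma g3C_inner_product : inner_product g3C.
Proof.
split.
  by apply/matrixP; do 2 case=> [[|[|[|[|[|[|[|[|//]]]]]]]] ?]; rewrite !mxE.
move=> x; have [a0 [a1 [a2 [a3 [a4 [a5 [a6 [a7 ->]]]]]]]] := vec8_surj x => x0.
pose l0 := - (1/4) * a1 - 1/2 * a2; pose l1 := - (3/4) * a1 + 1/2 * a2.
pose l2 := a0 + 1/4 * a1 - 1/2 * a2; pose l3 := 5/4 * a1 - 1/2 * a2 - 2 * a3.
have -> : ip g3C (vec8 a0 a1 a2 a3 a4 a5 a6 a7) (vec8 a0 a1 a2 a3 a4 a5 a6 a7) =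
    l0 * l0 + l1 * l1 + l2 * l2 + l3 * l3
    + (2 * a4) * (2 * a4) + (4 * a5) * (4 * a5) + a6 * a6 + a7 * a7.
  by rewrite ip_g3C /l0 /l1 /l2 /l3; field.
apply: sumsq8_gt0; apply: contra x0 => /eqP /vec8_eq0 [h0 [h1 [h2 [h3 [h4 [h5 [h6 h7]]]]]]].
by apply/eqP; vec8_eq; move: h0 h1 h2 h3; rewrite /l0 /l1 /l2 /l3; lra.
Qed.

Lemma J3C_g3C_compatible : compatible J3C g3C.
Proof. by move=> x y; coords x; coords y; rewrite !act_J3C !ip_g3C; field. Qed.

Lemma J3C_complex_structure : complex_structure (@h3CR2 R) J3C.
Proof.
split=> [x | x y]; first by coords x; rewrite !act_J3C vec8N; congr vec8; field.
by coords x; coords y; rewrite !act_J3C !h3CR2E !act_J3C; vec8_eq; field.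
Qed.

Lemma h3CR2_has_SKT : has_SKT (@h3CR2 R).
Proof.
exists J3C, g3C; split=> [||| x0 x1 x2 x3].
- exact: J3C_complex_structure.
- exact: g3C_inner_product.
- exact: J3C_g3C_compatible.
rewrite d3_torsionE; last 2 first.
- exact: J3C_g3C_compatible.
- by move=> x y w; coords x; coords y; coords w; rewrite !h3CR2E act_J3C h3CR2E; vec8_eq; ring.
by coords x0; coords x1; coords x2; coords x3; rewrite !act_J3C !h3CR2E !ip_g3C; field.
Qed.

End Examples.

Theorem corollary4p3 (R : realType) :
  (has_weak_HKT (@h5R3 R) /\ ~ has_SKT (@h5R3 R)) /\
  (has_SKT (@h3CR2 R) /\ has_weak_HKT (@h3CR2 R)) /\
  (has_SKT (@h7QR1 R) /\ has_weak_HKT (@h7QR1 R)).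
Proof.
split; [split | split; split].
- exact: h5R3_has_weak_HKT.
- exact: h5R3_no_SKT.
- exact: h3CR2_has_SKT.
- exact: h3CR2_has_weak_HKT.
- exact: h7QR1_has_SKT.
- exact: h7QR1_has_weak_HKT.
Qed.
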